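(* Let $m,n$ be positive integers and $(A,\boldsymbol{\gamma})\in[0,1)^{m\times n}\times[0,1)^m$. If $\langle A\boldsymbol{q}-\boldsymbol{\gamma}\rangle>0$ for every $\boldsymbol{q}\in\mathbb{Z}^n\setminus\{\boldsymbol{0}\}$, then either $S_l(A,\boldsymbol{\gamma})<\infty$ for all $l\in\mathbb{N}$, or $S_l(A,\boldsymbol{\gamma})=\infty$ for all $l\in\mathbb{N}$.
   Context: $[0,1)^{m\times n}$ is the set of real $m\times n$ matrices with entries in $[0,1)$. For $\boldsymbol{x}\in\mathbb{R}^n$, $\|\boldsymbol{x}\|=\max_i|x_i|$; for $\boldsymbol{y}\in\mathbb{R}^m$, $\langle\boldsymbol{y}\rangle=\min_{\boldsymbol{p}\in\mathbb{Z}^m}\|\boldsymbol{y}-\boldsymbol{p}\|$. For $l\in\mathbb{N}$, $S_l(A,\boldsymbol{\gamma})=\sum_{t=l}^\infty t^{n-1}\min_{\boldsymbol{q}\in\mathbb{Z}^n,\ l\le\|\boldsymbol{q}\|\le t}\langle A\boldsymbol{q}-\boldsymbol{\gamma}\rangle^m$. *)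

From HB Require Import structures.
From mathcomp Require Import all_boot all_order all_algebra.
From mathcomp Require Import all_classical all_reals all_analysis.
Set Implicit Arguments. Unset Strict Implicit. Unset Printing Implicit Defensive.
Import Order.TTheory GRing.Theory Num.Theory.
Local Open Scope classical_set_scope.
Local Open Scope ring_scope.

Definition supnorm (n : nat) (q : 'cV[int]_n) : nat := \max_(i < n) `|q i ord0|%N.

Definition rsupnorm {R : realType} (m : nat) (y : 'cV[R]_m) : R :=
  \big[Num.max/0]_(i < m) `|y i ord0|.

(* <y> = min_{p in Z^m} ||y - p||  (the minimum exists; written as inf) *)
Definition distZ {R : realType} (m : nat) (y : 'cV[R]_m) : R :=
  inf [set rsupnorm (y - map_mx (fun z : int => z%:~R) p) | p in [set: 'cV[int]_m]].

Definition affine_val {R : realType} (m n : nat) (A : 'M[R]_(m, n)) (gamma : 'cV[R]_m)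
  (q : 'cV[int]_n) : 'cV[R]_m :=
  A *m map_mx (fun z : int => z%:~R) q - gamma.

Definition S_term {R : realType} (m n : nat) (A : 'M[R]_(m, n)) (gamma : 'cV[R]_m)
  (l t : nat) : R :=
  (t%:R ^+ (n - 1)) *
  inf [set distZ (affine_val A gamma q) ^+ m
      | q in [set q : 'cV[int]_n | (l <= supnorm q <= t)%N]].

Definition S_l {R : realType} (m n : nat) (A : 'M[R]_(m, n)) (gamma : 'cV[R]_m)
  (l : nat) : \bar R :=
  (\sum_(l <= t <oo) (S_term A gamma l t)%:E)%E.

From HB Require Import structures.
From mathcomp Require Import all_boot all_order all_algebra.
From mathcomp Require Import all_classical all_reals all_analysis.
From mathcomp Require Import zify.
Import Order.TTheory GRing.Theory Num.Theory.
Set Implicit Arguments.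
Unset Strict Implicit.
Unset Printing Implicit Defensive.
Local Open Scope classical_set_scope.
Local Open Scope ring_scope.

(* For t >= l, the t-th term of S_1 is at most the t-th term of S_l, since its
   minimum runs over the larger shell 1 <= ||q|| <= t.  Conversely, the part
   1 <= ||q|| < l of that shell contains only finitely many nonzero q, on which
   <Aq - gamma>^m has a positive minimum c; comparing with a fixed q0 of norm l
   bounds the t-th term of S_l by K times that of S_1, with K independent of t.
   As S_1 is finite exactly when its tail from l is, S_1 and S_l are finite or
   infinite together. *)

Section NonnegSeries.
Variable R : realType.
Implicit Types u v : nat -> R.

Lemma nneseries_tail_lty u M N : (forall t, 0 <= u t) -> (M <= N)%N ->
  (\sum_(M <= t <oo) (u t)%:E < +oo)%E = (\sum_(N <= t <oo) (u t)%:E < +oo)%E.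
Proof.
move=> u_ge0 /subnKC <-.
have tail_ge0 k : (0 <= \sum_(k <= t <oo) (u t)%:E)%E.
  by apply: nneseries_ge0 => t _ _; rewrite lee_fin.
rewrite (@nneseries_split R _ M (N - M)) => [|t _]; last by rewrite lee_fin.
rewrite sumEFin -!ge0_fin_numE ?adde_ge0 ?lee_fin ?sumr_ge0 //.
by rewrite fin_numD fin_numE.
Qed.

Lemma nneseries_lty_le u v (K : R) N :
  (forall t, 0 <= u t) -> (forall t, 0 <= v t) -> 0 <= K ->
  (forall t, (N <= t)%N -> u t <= K * v t) ->
  (\sum_(N <= t <oo) (v t)%:E < +oo)%E -> (\sum_(N <= t <oo) (u t)%:E < +oo)%E.
Proof.
move=> u_ge0 v_ge0 K_ge0 u_le v_fin.
apply: (@le_lt_trans _ _ (K%:E * \sum_(N <= t <oo) (v t)%:E)%E); last first.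
  by rewrite lte_mul_pinfty ?lee_fin.
rewrite -nneseriesZl => [|t _]; last by rewrite lee_fin.
rewrite !(eseries_cond _ _ N); apply: lee_nneseries => [t _ _|t /= N_le].
  by rewrite lee_fin.
by rewrite -EFinM lee_fin u_le.
Qed.

End NonnegSeries.

Section SupNorm.
Variable n : nat.
Implicit Types q : 'cV[int]_n.

Lemma supnorm0 : supnorm (0 : 'cV[int]_n) = 0%N.
Proof. by rewrite /supnorm big1 // => i _; rewrite mxE. Qed.

Lemma supnorm_const_mx (k : nat) : (0 < n)%N -> supnorm (const_mx k%:Z : 'cV[int]_n) = k.
Proof.
move=> n_gt0; apply/eqP; rewrite eqn_leq; apply/andP; split.
  by apply/bigmax_leqP => i _; rewrite mxE.
have := @leq_bigmax _ (fun i => `|(const_mx k%:Z : 'cV[int]_n) i ord0|%N) (Ordinal n_gt0).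
by rewrite mxE.
Qed.

Lemma supnorm_ball_finite (N : nat) :
  exists s : seq 'cV[int]_n, forall q, (supnorm q <= N)%N -> q \in s.
Proof.
pose shift (v : 'cV['I_(2 * N).+1]_n) : 'cV[int]_n :=
  \matrix_(i, j) ((v i j : nat)%:Z - N%:Z).
exists (map shift (enum 'cV['I_(2 * N).+1]_n)) => q q_le.
have q_entry i j : (`|q i j| <= N)%N.
  rewrite (ord1 j); apply: leq_trans q_le.
  exact: (@leq_bigmax _ (fun i => `|q i ord0|%N)).
pose v : 'cV['I_(2 * N).+1]_n := \matrix_(i, j) inord (absz (q i j + N%:Z)).
have -> : q = shift v by apply/matrixP => i j; rewrite !mxE inordK; have := q_entry i j; lia.
by rewrite map_f ?mem_enum.
Qed.

End SupNorm.

Lemma seq_pos_lbound (T : eqType) (R : realDomainType) (f : T -> R) (P : pred T)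
    (s : seq T) : (forall x, P x -> 0 < f x) ->
  exists2 c, 0 < c & forall x, x \in s -> P x -> c <= f x.
Proof.
move=> f_gt0; elim: s => [|y s [c c_gt0 c_le]]; first by exists 1.
have [Py|nPy] := boolP (P y); last first.
  exists c => // x; rewrite inE => /orP[/eqP ->|/c_le //].
  by move=> Py; rewrite Py in nPy.
exists (Num.min c (f y)); first by rewrite lt_min c_gt0 f_gt0.
move=> x; rewrite inE => /orP[/eqP -> _|/c_le x_le /x_le]; first by rewrite ge_min lexx orbT.
by rewrite ge_min => ->.
Qed.

Lemma ball_pos_lbound (R : realDomainType) (n N : nat) (f : 'cV[int]_n -> R) :
  (forall q, q != 0 -> 0 < f q) ->
  exists2 c, 0 < c & forall q, q != 0 -> (supnorm q <= N)%N -> c <= f q.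
Proof.
move=> f_gt0; have [s s_ball] := supnorm_ball_finite n N.
have [c c_gt0 c_le] := seq_pos_lbound s f_gt0.
by exists c => // q q_neq0 /s_ball /c_le; apply.
Qed.

Section ShellInf.
Variables (R : realType) (n : nat) (f : 'cV[int]_n -> R).
Hypothesis f_ge0 : forall q, 0 <= f q.

Definition shell_inf (l t : nat) : R :=
  inf [set f q | q in [set q : 'cV[int]_n | (l <= supnorm q <= t)%N]].

Lemma shell_inf_ge0 l t : 0 <= shell_inf l t.
Proof.
rewrite /shell_inf; set S := [set f q | q in _].
have [->|/set0P S_neq0] := eqVneq S set0; first by rewrite inf0.
by apply: lb_le_inf => // _ [q _ <-].
Qed.

Lemma shell_inf_le l t q : (l <= supnorm q <= t)%N -> shell_inf l t <= f q.
Proof.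
move=> q_shell; apply: ge_inf; last by exists q.
by exists 0 => _ [p _ <-].
Qed.

Lemma shell_inf_mono l l' t : (0 < n)%N -> (l <= l' <= t)%N ->
  shell_inf l t <= shell_inf l' t.
Proof.
move=> n_gt0 /andP[l_le l'_le]; apply: lb_le_inf.
  by exists (f (const_mx l'%:Z)), (const_mx l'%:Z); rewrite //= supnorm_const_mx ?leqnn.
move=> _ [q /andP[q_ge q_le] <-]; apply: shell_inf_le.
by rewrite (leq_trans l_le q_ge) q_le.
Qed.

Lemma shell_inf_le_scale l : (0 < n)%N -> (0 < l)%N ->
  (forall q, q != 0 -> 0 < f q) ->
  exists2 K, 0 <= K & forall t, (l <= t)%N -> shell_inf l t <= K * shell_inf 1 t.
Proof.
move=> n_gt0 l_gt0 f_gt0.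
pose q0 : 'cV[int]_n := const_mx l%:Z.
have q0_norm : supnorm q0 = l by exact: supnorm_const_mx.
have [c c_gt0 c_le] := ball_pos_lbound l f_gt0.
(* K is chosen so that K * c >= f q0, which covers the q with ||q|| < l. *)
pose K := 1 + f q0 / c.
have K_ge1 : 1 <= K by rewrite lerDl divr_ge0 // ltW.
have K_gt0 : 0 < K := lt_le_trans ltr01 K_ge1.
exists K => [|t l_le_t]; first exact: ltW.
have inf_le_q0 : shell_inf l t <= f q0 by apply: shell_inf_le; rewrite q0_norm leqnn.
rewrite mulrC -ler_pdivrMr //; apply: lb_le_inf.
  by exists (f q0), q0; rewrite //= q0_norm l_gt0.
move=> _ [q /andP[q_ge1 q_le] <-]; rewrite ler_pdivrMr //.
have [l_le_q|q_lt_l] := leqP l (supnorm q).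
  apply: (@le_trans _ _ (f q)); first by apply: shell_inf_le; rewrite l_le_q.
  by rewrite ler_peMr.
have q_neq0 : q != 0 by apply: contraTneq q_ge1 => ->; rewrite supnorm0.
apply: (le_trans inf_le_q0); apply: (@le_trans _ _ (c * K)).
  by rewrite mulrDr mulr1 mulrCA divff ?gt_eqF // mulr1 lerDr ltW.
by rewrite ler_wpM2r ?(ltW K_gt0) // c_le // ltnW.
Qed.

End ShellInf.

Lemma rsupnorm_ge0 (R : realType) (k : nat) (y : 'cV[R]_k) : 0 <= rsupnorm y.
Proof. by apply: (big_ind (fun x => 0 <= x)) => // x z x_ge0 z_ge0; rewrite le_max x_ge0. Qed.

Lemma distZ_ge0 (R : realType) (k : nat) (y : 'cV[R]_k) : 0 <= distZ y.
Proof.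
apply: lb_le_inf; last by move=> _ [p _ <-]; exact: rsupnorm_ge0.
by exists (rsupnorm (y - map_mx (fun z : int => z%:~R) 0)), 0.
Qed.

Theorem lemma2p2 (R : realType) (m n : nat) (hm : (0 < m)%N) (hn : (0 < n)%N)
  (A : 'M[R]_(m, n)) (gamma : 'cV[R]_m)
  (hA : forall i j, 0 <= A i j < 1)
  (hg : forall i, 0 <= gamma i ord0 < 1)
  (hbad : forall q : 'cV[int]_n, q != 0 -> 0 < distZ (affine_val A gamma q)) :
  (forall l : nat, (0 < l)%N -> (S_l A gamma l < +oo)%E) \/
  (forall l : nat, (0 < l)%N -> S_l A gamma l = +oo%E).
Proof.
pose F q := distZ (affine_val A gamma q) ^+ m.
have F_ge0 q : 0 <= F q by rewrite exprn_ge0 ?distZ_ge0.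
have F_gt0 q : q != 0 -> 0 < F q by move/hbad; exact: exprn_gt0.
have term_ge0 l t : 0 <= S_term A gamma l t.
  by rewrite mulr_ge0 ?exprn_ge0 ?(shell_inf_ge0 F_ge0).
have term_mono l t : (0 < l <= t)%N -> S_term A gamma 1 t <= S_term A gamma l t.
  by move=> l_shell; rewrite ler_wpM2l ?exprn_ge0 ?shell_inf_mono.
have [S1_fin|S1_inf] := boolP (S_l A gamma 1 < +oo)%E; [left|right] => l l_gt0.
- have [K K_ge0 inf_le] := shell_inf_le_scale F_ge0 hn l_gt0 F_gt0.
  apply: (@nneseries_lty_le _ _ (S_term A gamma 1) K) => // [t l_le_t|].
    by rewrite mulrCA ler_wpM2l ?exprn_ge0 ?inf_le.
  by rewrite -(nneseries_tail_lty _ l_gt0).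
- apply/eqP/negPn; rewrite -ltey; apply: contra S1_inf => Sl_fin.
  rewrite /S_l (nneseries_tail_lty _ l_gt0) //.
  apply: (@nneseries_lty_le _ _ (S_term A gamma l) 1) Sl_fin => // t l_le_t.
  by rewrite mul1r term_mono ?l_gt0.
Qed.
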